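(* Let $\vec X^m\in\underline V^h_{\partial_0}$ satisfy assumptions $(\mathfrak A)$ and $(\mathfrak B)^h$, and let $\Delta t_m>0$. Then there exists a unique pair $(\delta\vec X^{m+1},\kappa^{m+1})\in\underline V^h_\partial\times V^h$ such that, with $\vec X^{m+1}=\vec X^m+\delta\vec X^{m+1}$, $$\Big(\tfrac{\vec X^{m+1}-\vec X^m}{\Delta t_m},\chi\,\vec\nu^m|\vec X^m_\rho|\Big)^h=\Big(\kappa^{m+1}-\mathfrak K^m(\kappa^{m+1}),\chi\,|\vec X^m_\rho|\Big)^h\quad\forall\,\chi\in V^h,$$ $$\Big(\kappa^{m+1}\vec\nu^m,\vec\eta\,|\vec X^m_\rho|\Big)^h+\Big(\vec X^{m+1}_\rho,\vec\eta_\rho|\vec X^m_\rho|^{-1}\Big)=-\sum_{i=1}^2\sum_{p\in\partial_iI}\widehat\varrho^{(p)}\,\vec\eta(p)\cdot\vec e_{3-i}\quad\forall\,\vec\eta\in\underline V^h_\partial .$$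
   Context: Setup. $\vec e_1=(1,0)^T$, $\vec e_2=(0,1)^T$; ''$\cdot$'' is the Euclidean inner product. $I$ is either the periodic interval $\mathbb R/\mathbb Z$ (with $\partial I=\emptyset$) or $I=(0,1)$ (with $\partial I=\{0,1\}$). $\partial I=\partial_DI\cup\partial_0I\cup\partial_1I\cup\partial_2I$ is a given disjoint partition, and $\widehat\varrho^{(p)}\in\mathbb R$, $p\in\{0,1\}$, are given constants with $|\widehat\varrho^{(p)}|\le1$. Let $J\ge3$, $h=1/J$, $q_j=jh$ ($j=0,\dots,J$; $q_0=q_J$ identified in the periodic case). $V^h$ is the space of continuous functions on $\overline I$ (periodic if $I=\mathbb R/\mathbb Z$) that are affine on each $[q_{j-1},q_j]$; $\underline V^h=[V^h]^2$; $\underline V^h_{\partial_0}=\{\vec\eta\in\underline V^h:\vec\eta(\rho)\cdot\vec e_1=0\ \forall\rho\in\partial_0I\}$; $\underline V^h_\partial=\{\vec\eta\in\underline V^h_{\partial_0}:\vec\eta(\rho)\cdot\vec e_i=0\ \forall\rho\in\partial_iI,\ i=1,2;\ \vec\eta(\rho)=\vec0\ \forall\rho\in\partial_DI\}$. $(\cdot,\cdot)$ is the $L^2(I)$ inner product (with dot product for vector functions), and for piecewise continuous $f,g$ (possibly discontinuous at nodes) the mass-lumped product is $(f,g)^h=\tfrac h2\sum_{j=1}^J[(fg)(q_j^-)+(fg)(q_{j-1}^+)]$. For $\vec X^m\in\underline V^h_{\partial_0}$ with $|\vec X^m_\rho|>0$ a.e., set $\vec\nu^m=-[\vec X^m_\rho]^\perp/|\vec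 X^m_\rho|$, where $(a,b)^\perp=(b,-a)$, and let $\vec\omega^m\in\underline V^h$ be defined by $(\vec\omega^m,\vec\varphi|\vec X^m_\rho|)^h=(\vec\nu^m,\vec\varphi|\vec X^m_\rho|)$ for all $\vec\varphi\in\underline V^h$. Assumption $(\mathfrak A)$: $|\vec X^m_\rho|>0$ a.e. on $I$ and $\vec X^m(\rho)\cdot\vec e_1>0$ for all $\rho\in\overline I\setminus\partial_0I$. Assumption $(\mathfrak B)^h$: the set $\{(\vec\nu^m,\chi|\vec X^m_\rho|)^h:\chi\in V^h\}\subset\mathbb R^2$ spans $\mathbb R^2$. For $\kappa\in V^h$, $\mathfrak K^m(\kappa)\in V^h$ is defined nodally by $\mathfrak K^m(\kappa)(q_j)=\frac{\vec\omega^m(q_j)\cdot\vec e_1}{\vec X^m(q_j)\cdot\vec e_1}$ if $q_j\in\overline I\setminus\partial_0I$ and $\mathfrak K^m(\kappa)(q_j)=-\kappa(q_j)$ if $q_j\in\partial_0I$. *)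

(* the scheme is a finite-dimensional algebraic problem;
   stated over an arbitrary real closed field R (sqrt needed for |X_rho|). *)
From HB Require Import structures.
From mathcomp Require Import all_boot all_order all_algebra.
Set Implicit Arguments. Unset Strict Implicit. Unset Printing Implicit Defensive.
Import Order.TTheory GRing.Theory Num.Theory.
Local Open Scope ring_scope.

(* Type of a boundary point p of I: p in d_D I, d_0 I, d_1 I or d_2 I. *)
Inductive bctype := BD | B0 | B1 | B2.

(* I = R/Z (no boundary) or I = (0,1) with the boundary type of rho=0 and rho=1. *)
Inductive domain := Periodic | Interval of bctype & bctype.

Section Defs.
Variable R : rcfType.
Variable J : nat.

Definition vec := (R * R)%type.
Definition dotv (u v : vec) : R := u.1 * v.1 + u.2 * v.2.
Definition nrm (u : vec) : R := Num.sqrt (dotv u u).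
Definition perpv (u : vec) : vec := (u.2, - u.1).
Definition addv (u v : vec) : vec := (u.1 + v.1, u.2 + v.2).
Definition scalev (a : R) (u : vec) : vec := (a * u.1, a * u.2).
Definition subv (u v : vec) : vec := addv u (scalev (-1) v).

Definition hh : R := (J%:R)^-1.

(* Nodes q_0..q_J are indexed by 'I_J.+1 (q_0 = q_J identified in the periodic
   case through the constraint in in_Vh); element e : 'I_J is [q_e, q_{e+1}]. *)
Definition lnode (e : 'I_J) : 'I_J.+1 := widen_ord (leqnSn J) e.
Definition rnode (e : 'I_J) : 'I_J.+1 := lift ord0 e.
(* one-sided endpoint of element e: false = q_e^+, true = q_{e+1}^- *)
Definition nd (e : 'I_J) (b : bool) : 'I_J.+1 := if b then rnode e else lnode e.

Definition bc_at (dom : domain) (j : 'I_J.+1) : option bctype :=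
  match dom with
  | Periodic => None
  | Interval bl br =>
      if (val j == 0)%N then Some bl else if (val j == J)%N then Some br else None
  end.

(* A function in V^h (resp. [V^h]^2) is given by its nodal values;
   periodicity means the value at q_0 equals the value at q_J. *)
Definition in_Vh {T : Type} (dom : domain) (f : 'I_J.+1 -> T) : Prop :=
  match dom with
  | Periodic => f ord0 = f ord_max
  | Interval _ _ => True
  end.

Definition in_Vh_d0 (dom : domain) (X : 'I_J.+1 -> vec) : Prop :=
  in_Vh dom X /\ (forall j, bc_at dom j = Some B0 -> (X j).1 = 0).

Definition in_Vh_d (dom : domain) (eta : 'I_J.+1 -> vec) : Prop :=
  in_Vh_d0 dom eta /\
  (forall j, (bc_at dom j = Some B1 -> (eta j).1 = 0) /\
             (bc_at dom j = Some B2 -> (eta j).2 = 0) /\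
             (bc_at dom j = Some BD -> eta j = (0, 0))).

(* A piecewise affine (possibly discontinuous at nodes) scalar function is
   described by its one-sided values F e false = F(q_e^+), F e true = F(q_{e+1}^-). *)
(* mass-lumped product (f,g)^h, applied to the product F = f g *)
Definition lump (F : 'I_J -> bool -> R) : R :=
  hh / 2%:R * \sum_(e < J) (F e true + F e false).
Definition lumpv (F : 'I_J -> bool -> vec) : vec :=
  (lump (fun e b => (F e b).1), lump (fun e b => (F e b).2)).

(* exact L^2(I) inner product of two piecewise affine functions:
   on an element, int f g = h/6 (2 f0 g0 + f0 g1 + f1 g0 + 2 f1 g1). *)
Definition l2pa (F G : 'I_J -> bool -> R) : R :=
  \sum_(e < J) hh / 6%:R *
     (2%:R * F e false * G e false + F e false * G e true
      + F e true * G e false + 2%:R * F e true * G e true).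
Definition l2v (F G : 'I_J -> bool -> vec) : R :=
  l2pa (fun e b => (F e b).1) (fun e b => (G e b).1)
  + l2pa (fun e b => (F e b).2) (fun e b => (G e b).2).

Definition Xrho (X : 'I_J.+1 -> vec) (e : 'I_J) : vec :=
  scalev hh^-1 (subv (X (rnode e)) (X (lnode e))).
Definition nu (X : 'I_J.+1 -> vec) (e : 'I_J) : vec :=
  scalev (- (nrm (Xrho X e))^-1) (perpv (Xrho X e)).

(* value of the piecewise linear X at the point q_e + t h of element e *)
Definition interp (X : 'I_J.+1 -> vec) (e : 'I_J) (t : R) : vec :=
  addv (scalev (1 - t) (X (lnode e))) (scalev t (X (rnode e))).

Definition assumptionA (dom : domain) (X : 'I_J.+1 -> vec) : Prop :=
  (forall e, 0 < nrm (Xrho X e)) /\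
  (forall e t, 0 <= t <= 1 ->
     ~ (t = 0 /\ bc_at dom (lnode e) = Some B0) ->
     ~ (t = 1 /\ bc_at dom (rnode e) = Some B0) ->
     0 < (interp X e t).1).

Definition nuchi (X : 'I_J.+1 -> vec) (chi : 'I_J.+1 -> R) : vec :=
  lumpv (fun e b => scalev (chi (nd e b) * nrm (Xrho X e)) (nu X e)).

(* Assumption (B)^h: the set {(nu, chi|X_rho|)^h : chi in V^h} spans R^2,
   i.e. every vector is a finite linear combination of its elements. *)
Definition assumptionB (dom : domain) (X : 'I_J.+1 -> vec) : Prop :=
  forall v : vec, exists s : seq (R * ('I_J.+1 -> R)),
    (forall i, (i < size s)%N -> in_Vh dom (nth (0, fun _ => 0) s i).2) /\
    v = foldr addv (0, 0) [seq scalev c.1 (nuchi X c.2) | c <- s].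

Definition omega_def (dom : domain) (X w : 'I_J.+1 -> vec) : Prop :=
  in_Vh dom w /\
  forall phi : 'I_J.+1 -> vec, in_Vh dom phi ->
    lump (fun e b => dotv (w (nd e b)) (scalev (nrm (Xrho X e)) (phi (nd e b))))
    = l2v (fun e _ => nu X e)
          (fun e b => scalev (nrm (Xrho X e)) (phi (nd e b))).

Definition Kop (dom : domain) (X w : 'I_J.+1 -> vec) (kappa : 'I_J.+1 -> R)
    (j : 'I_J.+1) : R :=
  match bc_at dom j with
  | Some B0 => - kappa j
  | _ => (w j).1 / (X j).1
  end.

Definition rho_at (rho0 rho1 : R) (j : 'I_J.+1) : R :=
  if (val j == 0)%N then rho0 else rho1.

(* sum_{i=1,2} sum_{p in d_i I} rho^{(p)} eta(p).e_{3-i} *)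
Definition bdry_term (dom : domain) (rho0 rho1 : R) (eta : 'I_J.+1 -> vec) : R :=
  \sum_(j < J.+1)
    match bc_at dom j with
    | Some B1 => rho_at rho0 rho1 j * (eta j).2
    | Some B2 => rho_at rho0 rho1 j * (eta j).1
    | _ => 0
    end.

Definition scheme (dom : domain) (rho0 rho1 : R) (X w : 'I_J.+1 -> vec) (dt : R)
    (dX : 'I_J.+1 -> vec) (kappa : 'I_J.+1 -> R) : Prop :=
  let X1 := fun j => addv (X j) (dX j) in
  (forall chi : 'I_J.+1 -> R, in_Vh dom chi ->
     lump (fun e b => dotv (scalev dt^-1 (subv (X1 (nd e b)) (X (nd e b))))
                           (scalev (chi (nd e b)) (nu X e)) * nrm (Xrho X e))
     = lump (fun e b => (kappa (nd e b) - Kop dom X w kappa (nd e b))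
                        * chi (nd e b) * nrm (Xrho X e))) /\
  (forall eta : 'I_J.+1 -> vec, in_Vh_d dom eta ->
     lump (fun e b => kappa (nd e b) * dotv (nu X e) (eta (nd e b)) * nrm (Xrho X e))
     + l2v (fun e _ => Xrho X1 e) (fun e _ => scalev (nrm (Xrho X e))^-1 (Xrho eta e))
     = - bdry_term dom rho0 rho1 eta).

End Defs.

(* The scheme is a square linear system for (dX, kappa) = (delta X^{m+1}, kappa^{m+1}) on a
   finite-dimensional space, so uniqueness gives existence.  Testing the homogeneous system
   with (dX, kappa) itself, the two normal-velocity terms cancel and what remains is
   dt ((kappa - K kappa) kappa |X_rho|)^h + (dX_rho, dX_rho |X_rho|^-1) = 0.  Since K kappa is
   -kappa on d_0 I and independent of kappa elsewhere, both terms are nonnegative, hence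
   kappa = 0 and dX is a constant vector.  The first equation then makes that constant
   orthogonal to every (nu, chi |X_rho|)^h, so it vanishes by (B)^h.
   Only |X_rho| > 0 from (A), (B)^h and dt > 0 are needed: the weights rho^(p), omega and
   X.e_1 > 0 only enter the right-hand side. *)

From Pilot Require Import Defs.
From HB Require Import structures.
From mathcomp Require Import all_boot all_order all_algebra.
From mathcomp Require Import ring lra zify.
From Stdlib Require Import Classical FunctionalExtensionality.
Set Implicit Arguments.
Unset Strict Implicit.
Unset Printing Implicit Defensive.
Import Order.TTheory GRing.Theory Num.Theory.
Local Open Scope ring_scope.

Section BilinearRepresentation.
Variables (F : fieldType) (vT : vectType F).

Lemma scalar0 (g : vT -> F) : scalar g -> g 0 = 0.
Proof.
move=> gL; have := gL 1 0 0; rewrite scale1r addr0 mul1r => g0.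
by apply: (addrI (g 0)); rewrite -g0 addr0.
Qed.

Lemma scalar_sum (g : vT -> F) : scalar g ->
  forall n (k : 'I_n -> F) (x : 'I_n -> vT),
  g (\sum_(i < n) k i *: x i) = \sum_(i < n) k i * g (x i).
Proof.
move=> gL; elim=> [|n IHn] k x; first by rewrite !big_ord0 scalar0.
by rewrite !big_ord_recl gL IHn.
Qed.

Lemma dimv_addv_line (U : {vspace vT}) x :
  x \notin U -> (\dim U < \dim (U + <[x]>))%N.
Proof.
move=> xU; have /dimv_leqif_eq[le_dim eq_dim] := addvSl U <[x]>%VS.
rewrite ltn_neqAle le_dim andbT eq_dim; apply: contra xU => /eqP ->.
exact: subvP (addvSr U _) _ (memv_line x).
Qed.

(* Grow a subspace inside [P] one vector at a time; the dimension bounds the process. *)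
Lemma vspace_of_linear_pred (P : vT -> Prop) :
  P 0 -> (forall a x y, P x -> P y -> P (a *: x + y)) ->
  exists U : {vspace vT}, forall x, x \in U <-> P x.
Proof.
move=> P0 PL.
suff grow (U : {vspace vT}) : (forall x, x \in U -> P x) ->
    exists V : {vspace vT}, forall x, x \in V <-> P x.
  by apply: (grow 0%VS) => x; rewrite memv0 => /eqP ->.
have [n] := ubnP (\dim {:vT} - \dim U); elim: n U => // n IHn U codimU UP.
case: (classic (forall x, P x -> x \in U)) => [Usat | /not_all_ex_not[x notUx]].
  by exists U => x; split; [apply: UP | apply: Usat].
have [Px /negP xU] := imply_to_and _ _ notUx.
apply: (IHn (U + <[x]>)%VS).
  have := dimv_addv_line xU; have := dimvS (subvf (U + <[x]>)%VS); lia.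
move=> _ /memv_addP[u uU [_ /vlineP[k ->] ->]].
by rewrite addrC; apply: PL => //; apply: UP.
Qed.

Variable B : vT -> vT -> F.
Hypotheses (BlinL : forall v, scalar (B^~ v)) (BlinR : forall u, scalar (B u)).

Lemma vspace_bilinear_representation (U : {vspace vT}) (f : vT -> F) :
  scalar f -> (forall u, u \in U -> (forall v, v \in U -> B u v = 0) -> u = 0) ->
  exists2 u, u \in U & forall v, v \in U -> B u v = f v.
Proof.
move=> fL Bnondeg; pose n := \dim U; pose b := vbasis U.
pose M : 'M[F]_n := \matrix_(i, j) B b`_i b`_j.
pose vec_of (c : 'rV[F]_n) := \sum_(i < n) c 0 i *: b`_i.
have vec_ofU c : vec_of c \in U.
  apply: memv_suml => i _; apply/memvZ/vbasis_mem/mem_nth.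
  by rewrite size_tuple.
have B_basis c (j : 'I_n) : B (vec_of c) b`_j = (c *m M) 0 j.
  by rewrite (scalar_sum (BlinL _)) !mxE; apply: eq_bigr => i _; rewrite mxE.
have B_ext u (g : vT -> F) : scalar g ->
    (forall j : 'I_n, B u b`_j = g b`_j) -> forall v, v \in U -> B u v = g v.
  move=> gL Bg v vU; rewrite (coord_vbasis vU) (scalar_sum (BlinR u)) (scalar_sum gL).
  by apply: eq_bigr => i _; rewrite Bg.
have M_unit : M \in unitmx.
  rewrite -row_free_unit -kermx_eq0; apply/eqP/row_matrixP => i.
  set c := row i _; have: c *m M = 0 by apply/sub_kermxP; apply: row_sub.
  move=> cM0; have zeroL : scalar (fun _ : vT => 0 : F).
    by move=> ? ? ?; rewrite mulr0 addr0.
  have /(freeP (basis_free (vbasisP U))) c0 : vec_of c = 0.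
    apply: Bnondeg (vec_ofU c) _; apply: (B_ext _ _ zeroL) => j.
    by rewrite B_basis cM0 mxE.
  by rewrite row0; apply/rowP => j; rewrite c0 mxE.
pose c := \row_j f b`_j *m invmx M; exists (vec_of c) => //.
by apply: B_ext => // j; rewrite B_basis mulmxKV // mxE.
Qed.

Lemma bilinear_representation_unique (P : vT -> Prop) (f : vT -> F) :
  P 0 -> (forall a x y, P x -> P y -> P (a *: x + y)) -> scalar f ->
  (forall u, P u -> (forall v, P v -> B u v = 0) -> u = 0) ->
  exists! u, P u /\ forall v, P v -> B u v = f v.
Proof.
move=> P0 PL fL Bnondeg; have [U UP] := vspace_of_linear_pred P0 PL.
have [|u uU Bu] := @vspace_bilinear_representation U f fL.
  by move=> u /UP Pu Bu; apply: Bnondeg => // v /UP; apply: Bu.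
exists u; split=> [|u' [Pu' Bu']]; first by split=> [|v /UP]; [apply/UP | apply: Bu].
apply/eqP; rewrite -subr_eq0 -scaleN1r addrC; apply/eqP/Bnondeg.
  by apply: PL => //; apply/UP.
by move=> v Pv; rewrite (BlinL v) /= Bu' // Bu ?mulN1r ?addNr //; apply/UP.
Qed.

End BilinearRepresentation.

Section DiscreteProducts.
Variables (R : rcfType) (J : nat).

Lemma hh_gt0 : (0 < J)%N -> 0 < hh R J.
Proof. by move=> J_gt0; rewrite invr_gt0 ltr0n. Qed.

Lemma eq_lump (F G : 'I_J -> bool -> R) : (forall e b, F e b = G e b) -> lump F = lump G.
Proof. by move=> FG; congr (_ * _); apply: eq_bigr => e _; rewrite !FG. Qed.

Lemma lump_lin (a : R) (F G H : 'I_J -> bool -> R) :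
  (forall e b, F e b = a * G e b + H e b) -> lump F = a * lump G + lump H.
Proof.
move=> FGH; rewrite /lump (eq_bigr (fun e => a * (G e true + G e false)
  + (H e true + H e false))) => [|e _]; last by rewrite !FGH; ring.
by rewrite big_split -mulr_sumr /=; ring.
Qed.

Lemma lump0 (F : 'I_J -> bool -> R) : (forall e b, F e b = 0) -> lump F = 0.
Proof. by move=> F0; rewrite /lump big1 ?mulr0 // => e _; rewrite !F0 addr0. Qed.

Lemma lumpZ (a : R) (F : 'I_J -> bool -> R) : lump (fun e b => a * F e b) = a * lump F.
Proof.
rewrite (@lump_lin a (fun e b => a * F e b) F (fun _ _ => 0)) => [|e b]; last by rewrite addr0.
by rewrite (@lump0 (fun _ _ => 0)) ?addr0.
Qed.

Lemma lump_ge0 (F : 'I_J -> bool -> R) : (forall e b, 0 <= F e b) -> 0 <= lump F.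
Proof.
move=> F_ge0; apply: mulr_ge0; first by rewrite divr_ge0 ?invr_ge0 ?ler0n.
by apply: sumr_ge0 => e _; apply: addr_ge0.
Qed.

Lemma plump_eq0 (F : 'I_J -> bool -> R) :
  (forall e b, 0 <= F e b) -> lump F = 0 -> forall e b, F e b = 0.
Proof.
move=> F_ge0 /eqP + e; have J_neq0 : (J == 0%N) = false by have := ltn_ord e; lia.
rewrite !mulf_eq0 !invr_eq0 !pnatr_eq0 J_neq0 /=.
move=> /eqP sum0; have F_pair_ge0 i (_ : true) := addr_ge0 (F_ge0 i true) (F_ge0 i false).
have /eqP := (psumr_eq0P F_pair_ge0 sum0) e isT.
by rewrite paddr_eq0 // => /andP[/eqP ? /eqP ?] [].
Qed.

Lemma l2pa_linl (a : R) (F G H K : 'I_J -> bool -> R) :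
  (forall e b, F e b = a * G e b + H e b) -> l2pa F K = a * l2pa G K + l2pa H K.
Proof.
by move=> FGH; rewrite /l2pa mulr_sumr -big_split /=; apply: eq_bigr => e _; rewrite !FGH; ring.
Qed.

Lemma l2pa_linr (a : R) (K F G H : 'I_J -> bool -> R) :
  (forall e b, F e b = a * G e b + H e b) -> l2pa K F = a * l2pa K G + l2pa K H.
Proof.
by move=> FGH; rewrite /l2pa mulr_sumr -big_split /=; apply: eq_bigr => e _; rewrite !FGH; ring.
Qed.

Lemma l2v_linl (a : R) (F G H K : 'I_J -> bool -> vec R) :
  (forall e b, F e b = Defs.addv (scalev a (G e b)) (H e b)) ->
  l2v F K = a * l2v G K + l2v H K.
Proof.
move=> FGH; rewrite /l2v (@l2pa_linl a (fun e b => (F e b).1)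
    (fun e b => (G e b).1) (fun e b => (H e b).1));
  last by move=> e b; rewrite FGH.
rewrite (@l2pa_linl a (fun e b => (F e b).2)
    (fun e b => (G e b).2) (fun e b => (H e b).2)); first ring.
by move=> e b; rewrite FGH.
Qed.

Lemma l2v_linr (a : R) (K F G H : 'I_J -> bool -> vec R) :
  (forall e b, F e b = Defs.addv (scalev a (G e b)) (H e b)) ->
  l2v K F = a * l2v K G + l2v K H.
Proof.
move=> FGH; rewrite /l2v (@l2pa_linr a _ (fun e b => (F e b).1)
    (fun e b => (G e b).1) (fun e b => (H e b).1));
  last by move=> e b; rewrite FGH.
rewrite (@l2pa_linr a _ (fun e b => (F e b).2)
    (fun e b => (G e b).2) (fun e b => (H e b).2)); first ring.
by move=> e b; rewrite FGH.
Qed.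

Lemma l2v0r (F G : 'I_J -> bool -> vec R) : (forall e b, G e b = (0, 0)) -> l2v F G = 0.
Proof. by move=> G0; rewrite /l2v /l2pa !big1 ?addr0 // => e _; rewrite !G0 /=; ring. Qed.

Lemma l2v_const (f g : 'I_J -> vec R) :
  l2v (fun e _ => f e) (fun e _ => g e) = \sum_(e < J) hh R J * dotv (f e) (g e).
Proof.
rewrite /l2v /l2pa -big_split; apply: eq_bigr => e _ /=.
have six_neq0 : (6%:R : R) != 0 by rewrite pnatr_eq0.
by rewrite /dotv; field.
Qed.

Lemma node_cover : (0 < J)%N -> forall j : 'I_J.+1, exists e b, nd e b = j.
Proof.
move=> J_gt0 j; have [j_lt_J | J_le_j] := ltnP j J.
  by exists (Ordinal j_lt_J), false; apply: val_inj.
have J1_lt_J : (J.-1 < J)%N by rewrite prednK.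
exists (Ordinal J1_lt_J), true; apply: val_inj => /=.
rewrite /bump /= add1n prednK //; have := ltn_ord j; lia.
Qed.

Lemma Xrho_eq0 (Y : 'I_J.+1 -> vec R) e : Xrho Y e = (0, 0) -> Y (rnode e) = Y (lnode e).
Proof.
have hhV_neq0 : (hh R J)^-1 != 0.
  by rewrite invr_eq0 gt_eqF // hh_gt0 // (leq_ltn_trans _ (ltn_ord e)).
rewrite /Xrho /scalev /subv /Defs.addv /=; case: (Y _) (Y _) => [a1 a2] [b1 b2] /=.
case=> /eqP + /eqP; rewrite !mulf_eq0 (negPf hhV_neq0) !mulN1r !subr_eq0 /=.
by move=> /eqP -> /eqP ->.
Qed.

Lemma Xrho_eq0_const (Y : 'I_J.+1 -> vec R) :
  (forall e, Xrho Y e = (0, 0)) -> forall j, Y j = Y ord0.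
Proof.
move=> Y'0; suff Yn n (n_lt : (n < J.+1)%N) : Y (Ordinal n_lt) = Y ord0.
  by move=> j; rewrite -(Yn _ (ltn_ord j)); congr Y; apply: val_inj.
elim: n n_lt => [|n IHn] n_lt; first by congr Y; apply: val_inj.
have n_lt_J : (n < J)%N by [].
transitivity (Y (rnode (Ordinal n_lt_J))); first by congr Y; apply: val_inj.
by rewrite Xrho_eq0 // -(IHn (ltnW n_lt)); congr Y; apply: val_inj.
Qed.

Lemma dotv_ge0 (x : vec R) : 0 <= dotv x x.
Proof. by rewrite /dotv addr_ge0 // -expr2 sqr_ge0. Qed.

Lemma dotv_eq0 (x : vec R) : dotv x x = 0 -> x = (0, 0).
Proof.
rewrite /dotv -!expr2 => /eqP; rewrite paddr_eq0 ?sqr_ge0 // !sqrf_eq0.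
by case: x => x1 x2 /andP[/eqP /= -> /eqP ->].
Qed.

Lemma dotvZr a (x y : vec R) : dotv x (scalev a y) = a * dotv x y.
Proof. by rewrite /dotv /=; ring. Qed.

Lemma dotv_nuchi_eq0 (dom : domain) (X : 'I_J.+1 -> vec R) (d : vec R) :
  assumptionB dom X -> (forall chi, in_Vh dom chi -> dotv d (nuchi X chi) = 0) ->
  d = (0, 0).
Proof.
move=> spanB d_orth; have [s [s_Vh d_span]] := spanB d.
have dotv_lin a x y : dotv d (Defs.addv (scalev a x) y) = a * dotv d x + dotv d y.
  by rewrite /dotv /=; ring.
apply: dotv_eq0; rewrite (congr1 (dotv d) d_span).
elim: s s_Vh {d_span} => [|c s IHs] s_Vh /=; first by rewrite /dotv /=; ring.
rewrite dotv_lin (d_orth _ (s_Vh 0%N isT)) IHs ?mulr0 ?addr0 // => i.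
exact: (s_Vh i.+1).
Qed.

End DiscreteProducts.

Section Scheme.
Variables (R : rcfType) (J : nat) (dom : domain) (rho0 rho1 : R).
Variables (X w : 'I_J.+1 -> vec R) (dt : R).

Local Notation N e := (nrm (Xrho X e)).
Local Notation Kop := (Kop dom X w).
Local Notation zerov := (fun _ : 'I_J.+1 => ((0 : R), (0 : R))).
Local Notation zero := (fun _ : 'I_J.+1 => (0 : R)).

Ltac vec_ring := rewrite /dotv /scalev /subv /Defs.addv /nu /perpv /=;
  first [congr pair; ring | ring].

Definition kweight (j : 'I_J.+1) : R := if bc_at dom j is Some B0 then 2%:R else 1.

Lemma sub_Kop (kappa : 'I_J.+1 -> R) j :
  kappa j - Kop kappa j = kweight j * kappa j - Kop zero j.
Proof. by rewrite /Kop /kweight; case: bc_at => [[]|]; ring. Qed.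

Definition flux (dX : 'I_J.+1 -> vec R) (chi : 'I_J.+1 -> R) : R :=
  lump (fun e b => dotv (dX (nd e b)) (scalev (chi (nd e b)) (nu X e)) * N e).

Definition curv (kappa chi : 'I_J.+1 -> R) : R :=
  lump (fun e b => kweight (nd e b) * kappa (nd e b) * chi (nd e b) * N e).

Definition stiff (Y eta : 'I_J.+1 -> vec R) : R :=
  l2v (fun e _ => Xrho Y e) (fun e _ => scalev (N e)^-1 (Xrho eta e)).

Definition Kload (chi : 'I_J.+1 -> R) : R :=
  lump (fun e b => Kop zero (nd e b) * chi (nd e b) * N e).

Lemma lump_velocity (dX : 'I_J.+1 -> vec R) chi :
  lump (fun e b => dotv (scalev dt^-1
          (subv (Defs.addv (X (nd e b)) (dX (nd e b))) (X (nd e b))))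
        (scalev (chi (nd e b)) (nu X e)) * N e)
  = dt^-1 * flux dX chi.
Proof. by rewrite -lumpZ; apply: eq_lump => e b; vec_ring. Qed.

Lemma lump_sub_Kop kappa chi :
  lump (fun e b => (kappa (nd e b) - Kop kappa (nd e b)) * chi (nd e b) * N e)
  = curv kappa chi - Kload chi.
Proof.
rewrite addrC -mulN1r; apply: lump_lin => e b; rewrite sub_Kop; ring.
Qed.

Lemma lump_kappa_nu kappa (eta : 'I_J.+1 -> vec R) :
  lump (fun e b => kappa (nd e b) * dotv (nu X e) (eta (nd e b)) * N e) = flux eta kappa.
Proof. by apply: eq_lump => e b; vec_ring. Qed.

Lemma stiff_addl (dX eta : 'I_J.+1 -> vec R) :
  l2v (fun e _ => Xrho (fun j => Defs.addv (X j) (dX j)) e)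
      (fun e _ => scalev (N e)^-1 (Xrho eta e))
  = stiff X eta + stiff dX eta.
Proof. by rewrite -[stiff X eta]mul1r; apply: l2v_linl => e b; rewrite /Xrho; vec_ring. Qed.

Lemma flux0l kappa : flux zerov kappa = 0.
Proof. by apply: lump0 => e b; vec_ring. Qed.

Lemma flux0r dX : flux dX zero = 0.
Proof. by apply: lump0 => e b; vec_ring. Qed.

Lemma curv0r kappa : curv kappa zero = 0.
Proof. by apply: lump0 => e b; ring. Qed.

Lemma stiff0r Y : stiff Y zerov = 0.
Proof. by apply: l2v0r => e b; rewrite /Xrho; vec_ring. Qed.

Lemma Kload0 : Kload zero = 0.
Proof. by apply: lump0 => e b; ring. Qed.

Lemma bdry_term0 : bdry_term dom rho0 rho1 zerov = 0.
Proof. by rewrite /bdry_term big1 // => j _; case: bc_at => [[]|]; rewrite ?mulr0. Qed.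

Definition dofs := {ffun 'I_J.+1 -> (R^o * R^o) * R^o}.
Definition dX_of (u : dofs) (j : 'I_J.+1) : vec R := (u j).1.
Definition kappa_of (u : dofs) (j : 'I_J.+1) : R := (u j).2.
Definition dofs_of (p : ('I_J.+1 -> vec R) * ('I_J.+1 -> R)) : dofs :=
  [ffun j => ((p.1 j : R^o * R^o), (p.2 j : R^o))].

Lemma dX_of_dofs p : dX_of (dofs_of p) = p.1.
Proof. by apply: functional_extensionality => j; rewrite /dX_of ffunE. Qed.

Lemma kappa_of_dofs p : kappa_of (dofs_of p) = p.2.
Proof. by apply: functional_extensionality => j; rewrite /kappa_of ffunE. Qed.

Lemma dX_ofD a u v j :
  dX_of (a *: u + v) j = Defs.addv (scalev a (dX_of u j)) (dX_of v j).
Proof. by rewrite /dX_of !ffunE. Qed.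

Lemma kappa_ofD a u v j : kappa_of (a *: u + v) j = a * kappa_of u j + kappa_of v j.
Proof. by rewrite /kappa_of !ffunE. Qed.

Definition admissible (u : dofs) := in_Vh_d dom (dX_of u) /\ in_Vh dom (kappa_of u).

Lemma in_Vh_const {T : Type} (c : T) : in_Vh dom (fun _ : 'I_J.+1 => c).
Proof. by case: dom. Qed.

Lemma in_Vh_d_zero : in_Vh_d dom zerov.
Proof. by do 2?split => //; apply: in_Vh_const. Qed.

Lemma admissible_of p : admissible (dofs_of p) <-> in_Vh_d dom p.1 /\ in_Vh dom p.2.
Proof. by rewrite /admissible dX_of_dofs kappa_of_dofs. Qed.

Lemma admissible0 : admissible 0.
Proof.
have -> : 0 = dofs_of (zerov, zero) by apply/ffunP => j; rewrite !ffunE.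
by apply/admissible_of; split; [apply: in_Vh_d_zero | apply: in_Vh_const].
Qed.

Lemma admissibleD a u v : admissible u -> admissible v -> admissible (a *: u + v).
Proof.
move=> [[[Vu bu0] bu] Vku] [[[Vv bv0] bv] Vkv]; split; [split; [split|] |].
- by move: Vu Vv; case: dom => //= Vu Vv; rewrite !dX_ofD Vu Vv.
- by move=> j Bj; rewrite dX_ofD /= (bu0 j Bj) (bv0 j Bj) mulr0 addr0.
- move=> j; have [bu1 [bu2 buD]] := bu j; have [bv1 [bv2 bvD]] := bv j.
  rewrite dX_ofD; split; [|split] => Bj.
  + by rewrite /= (bu1 Bj) (bv1 Bj) mulr0 addr0.
  + by rewrite /= (bu2 Bj) (bv2 Bj) mulr0 addr0.
  + by rewrite (buD Bj) (bvD Bj) /scalev /Defs.addv /= mulr0 addr0.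
- by move: Vku Vkv; case: dom => //= Vku Vkv; rewrite !kappa_ofD Vku Vkv.
Qed.

(* Both equations tested with [v = (eta, chi)], the first one multiplied by [dt] and with its
   sides swapped: the two [flux] terms are antisymmetric in [u] and [v]. *)
Definition Bform (u v : dofs) : R :=
  flux (dX_of v) (kappa_of u) - flux (dX_of u) (kappa_of v)
  + dt * curv (kappa_of u) (kappa_of v) + stiff (dX_of u) (dX_of v).

Definition load (v : dofs) : R :=
  dt * Kload (kappa_of v) - bdry_term dom rho0 rho1 (dX_of v) - stiff X (dX_of v).

Lemma flux_linl a u v chi :
  flux (dX_of (a *: u + v)) chi = a * flux (dX_of u) chi + flux (dX_of v) chi.
Proof. by apply: lump_lin => e b; rewrite dX_ofD; vec_ring. Qed.

Lemma flux_linr a u v dX :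
  flux dX (kappa_of (a *: u + v)) = a * flux dX (kappa_of u) + flux dX (kappa_of v).
Proof. by apply: lump_lin => e b; rewrite kappa_ofD; vec_ring. Qed.

Lemma curv_linl a u v chi :
  curv (kappa_of (a *: u + v)) chi = a * curv (kappa_of u) chi + curv (kappa_of v) chi.
Proof. by apply: lump_lin => e b; rewrite kappa_ofD; ring. Qed.

Lemma curv_linr a u v kappa :
  curv kappa (kappa_of (a *: u + v)) = a * curv kappa (kappa_of u) + curv kappa (kappa_of v).
Proof. by apply: lump_lin => e b; rewrite kappa_ofD; ring. Qed.

Lemma stiff_linl a u v eta :
  stiff (dX_of (a *: u + v)) eta = a * stiff (dX_of u) eta + stiff (dX_of v) eta.
Proof. by apply: l2v_linl => e b; rewrite /Xrho !dX_ofD; vec_ring. Qed.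

Lemma stiff_linr a u v Y :
  stiff Y (dX_of (a *: u + v)) = a * stiff Y (dX_of u) + stiff Y (dX_of v).
Proof. by apply: l2v_linr => e b; rewrite /Xrho !dX_ofD; vec_ring. Qed.

Lemma Kload_lin a u v :
  Kload (kappa_of (a *: u + v)) = a * Kload (kappa_of u) + Kload (kappa_of v).
Proof. by apply: lump_lin => e b; rewrite kappa_ofD; ring. Qed.

Lemma bdry_term_lin a u v :
  bdry_term dom rho0 rho1 (dX_of (a *: u + v))
  = a * bdry_term dom rho0 rho1 (dX_of u) + bdry_term dom rho0 rho1 (dX_of v).
Proof.
rewrite /bdry_term mulr_sumr -big_split; apply: eq_bigr => j _ /=.
by rewrite dX_ofD; case: bc_at => [[]|]; vec_ring.
Qed.

Lemma Bform_linl v : scalar (Bform^~ v).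
Proof. by move=> a u1 u2; rewrite /Bform flux_linr flux_linl curv_linl stiff_linl; ring. Qed.

Lemma Bform_linr u : scalar (Bform u).
Proof. by move=> a v1 v2; rewrite /Bform flux_linl flux_linr curv_linr stiff_linr; ring. Qed.

Lemma load_lin : scalar load.
Proof. by move=> a v1 v2; rewrite /load Kload_lin bdry_term_lin stiff_linr; ring. Qed.

Lemma scheme_iff u : dt != 0 ->
  scheme dom rho0 rho1 X w dt (dX_of u) (kappa_of u) <->
  forall v, admissible v -> Bform u v = load v.
Proof.
move=> dt_neq0; split=> [[scheme_kappa scheme_dX] v [Vd_v Vh_v] | Bu].
  have := scheme_kappa _ Vh_v; rewrite lump_velocity lump_sub_Kop => eq_kappa.
  have := scheme_dX _ Vd_v; rewrite lump_kappa_nu stiff_addl => eq_dX.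
  have flux_u : flux (dX_of u) (kappa_of v)
                 = dt * (curv (kappa_of u) (kappa_of v) - Kload (kappa_of v)).
    by rewrite -eq_kappa mulrA mulfV ?mul1r.
  by rewrite /Bform /load flux_u -eq_dX; ring.
split=> [chi Vh_chi | eta Vd_eta].
  have := Bu _ (proj2 (admissible_of (zerov, chi)) (conj in_Vh_d_zero Vh_chi)).
  rewrite /Bform /load dX_of_dofs kappa_of_dofs /= flux0l stiff0r bdry_term0 stiff0r.
  rewrite lump_velocity lump_sub_Kop => Bchi.
  by apply: (mulfI dt_neq0); rewrite mulrA mulfV ?mul1r //; lra.
have := Bu _ (proj2 (admissible_of (eta, zero)) (conj Vd_eta (in_Vh_const (0 : R)))).
rewrite /Bform /load dX_of_dofs kappa_of_dofs /= flux0r curv0r Kload0.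
rewrite lump_kappa_nu stiff_addl => Beta; lra.
Qed.

Hypothesis N_gt0 : forall e, 0 < N e.

Lemma kweight_gt0 j : 0 < kweight j.
Proof. by rewrite /kweight; case: bc_at => [[]|]; rewrite ?ltr0n ?ltr01. Qed.

Lemma curv_integrand_ge0 kappa e b :
  0 <= kweight (nd e b) * kappa (nd e b) * kappa (nd e b) * N e.
Proof.
apply: mulr_ge0 (ltW (N_gt0 e)).
by rewrite -mulrA mulr_ge0 ?(ltW (kweight_gt0 _)) // -expr2 sqr_ge0.
Qed.

Lemma curv_ge0 kappa : 0 <= curv kappa kappa.
Proof. exact: lump_ge0 (curv_integrand_ge0 kappa). Qed.

Lemma curv_eq0 kappa : (0 < J)%N -> curv kappa kappa = 0 -> forall j, kappa j = 0.
Proof.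
move=> J_gt0 curv0 j; have [e [b <-]] := node_cover J_gt0 j.
have /eqP := plump_eq0 (curv_integrand_ge0 kappa) curv0 e b.
by rewrite !mulf_eq0 (gt_eqF (N_gt0 e)) (gt_eqF (kweight_gt0 _)) orbb orbF => /eqP.
Qed.

Lemma stiff_diagE Y :
  stiff Y Y = \sum_(e < J) hh R J * ((N e)^-1 * dotv (Xrho Y e) (Xrho Y e)).
Proof. by rewrite /stiff l2v_const; apply: eq_bigr => e _; rewrite dotvZr. Qed.

Lemma stiff_integrand_ge0 Y e : 0 <= hh R J * ((N e)^-1 * dotv (Xrho Y e) (Xrho Y e)).
Proof. by rewrite !mulr_ge0 ?dotv_ge0 ?invr_ge0 ?ler0n ?ltW ?N_gt0. Qed.

Lemma stiff_ge0 Y : 0 <= stiff Y Y.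
Proof. by rewrite stiff_diagE sumr_ge0 // => e _; apply: stiff_integrand_ge0. Qed.

Lemma stiff_eq0 Y : stiff Y Y = 0 -> forall e, Xrho Y e = (0, 0).
Proof.
rewrite stiff_diagE => /psumr_eq0P stiff0 e; apply: dotv_eq0.
have /eqP := stiff0 (fun e _ => stiff_integrand_ge0 Y e) e isT.
have J_gt0 : (0 < J)%N by apply: leq_ltn_trans (ltn_ord e).
by rewrite !mulf_eq0 (gt_eqF (hh_gt0 R J_gt0)) invr_eq0 (gt_eqF (N_gt0 e)) => /eqP.
Qed.

Lemma flux_const d chi : flux (fun _ => d) chi = dotv d (nuchi X chi).
Proof.
rewrite /flux /nuchi /lumpv /dotv /= -!lumpZ -[X in _ = X + _]mul1r.
by apply: lump_lin => e b; vec_ring.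
Qed.

Lemma Bform_diag u :
  Bform u u = dt * curv (kappa_of u) (kappa_of u) + stiff (dX_of u) (dX_of u).
Proof. by rewrite /Bform subrr add0r. Qed.

Hypotheses (J_gt0 : (0 < J)%N) (dt_gt0 : 0 < dt) (spanB : assumptionB dom X).

Lemma Bform_nondegenerate u :
  admissible u -> (forall v, admissible v -> Bform u v = 0) -> u = 0.
Proof.
move=> adm_u Bu0; have /eqP := Bu0 u adm_u.
rewrite Bform_diag paddr_eq0 ?stiff_ge0 ?(mulr_ge0 (ltW dt_gt0) (curv_ge0 _)) //.
rewrite mulf_eq0 (gt_eqF dt_gt0) /= => /andP[/eqP/(curv_eq0 J_gt0) kappa0].
move=> /eqP/stiff_eq0/Xrho_eq0_const dX_const.
have d0 : dX_of u ord0 = (0, 0).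
  apply: dotv_nuchi_eq0 spanB _ => chi Vh_chi.
  have := Bu0 _ (proj2 (admissible_of (zerov, chi)) (conj in_Vh_d_zero Vh_chi)).
  rewrite /Bform dX_of_dofs kappa_of_dofs /= flux0l stiff0r.
  have -> : dX_of u = fun _ => dX_of u ord0 by apply: functional_extensionality.
  rewrite flux_const.
  have -> : curv (kappa_of u) chi = 0 by apply: lump0 => e b; rewrite kappa0; ring.
  by move=> /eqP; rewrite mulr0 !addr0 sub0r oppr_eq0 => /eqP.
apply/ffunP => j; move: (dX_const j) (kappa0 j); rewrite d0 ffunE /dX_of /kappa_of.
by case: (u j) => [[? ?] ?] /= -> ->.
Qed.

End Scheme.

Theorem lemma4p1 (R : rcfType) (J : nat) (dom : domain) (rho0 rho1 : R)
    (X w : 'I_J.+1 -> R * R) (dt : R) :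
  (3 <= J)%N -> `|rho0| <= 1 -> `|rho1| <= 1 ->
  in_Vh_d0 dom X -> assumptionA dom X -> assumptionB dom X ->
  omega_def dom X w -> 0 < dt ->
  exists! p : ('I_J.+1 -> R * R) * ('I_J.+1 -> R),
    [/\ in_Vh_d dom p.1, in_Vh dom p.2 & scheme dom rho0 rho1 X w dt p.1 p.2].
Proof.
move=> J_ge3 _ _ _ [N_gt0 _] spanB _ dt_gt0.
have J_gt0 : (0 < J)%N by apply: leq_trans J_ge3.
have scheme_iff_dt u := scheme_iff dom rho0 rho1 X w u (lt0r_neq0 dt_gt0).
have [u [[[Vd_u Vh_u] solves_u] u_unique]] :=
  bilinear_representation_unique (Bform_linl dom X dt) (Bform_linr dom X dt)
    (@admissible0 R J dom) (@admissibleD _ _ dom) (load_lin dom rho0 rho1 X w dt)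
    (Bform_nondegenerate N_gt0 J_gt0 dt_gt0 spanB).
exists (dX_of u, kappa_of u); split=> [|[dX kappa] [Vd Vh solves]].
  by split=> //; apply/scheme_iff_dt.
have -> : (dX, kappa) = (dX_of (dofs_of (dX, kappa)), kappa_of (dofs_of (dX, kappa))).
  by rewrite dX_of_dofs kappa_of_dofs.
rewrite -(u_unique (dofs_of (dX, kappa))) //; split; first exact/admissible_of.
by apply/scheme_iff_dt; rewrite dX_of_dofs kappa_of_dofs.
Qed.
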